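(* Let $\mathcal H$ and $\mathcal H'$ be the rank-one-root affine Hecke algebras described in the context. There is no algebra homomorphism $I:\mathcal H\to\mathcal H'$ such that $I(T_s)=c'\theta_{k(\alpha')^\vee}T_{s'}+b'$ for some $c'\in\mathbb C^\times$, $k\in\frac12\mathbb Z$ and $b'\in\mathbb C[Y']$, and $I(\theta_{\alpha^\vee})=c\,\theta_{n(\alpha')^\vee}$ for some $c\in\mathbb C^\times$ and positive half-integer $n\in\frac12+\mathbb Z$ (here $k(\alpha')^\vee,n(\alpha')^\vee\in Y'$).
   Context: Let $\mathcal R=(X,R=\{\pm\alpha\},Y,R^\vee=\{\pm\alpha^\vee\},\Delta=\{\alpha\})$ and $\mathcal R'=(X',\{\pm\alpha'\},Y',\{\pm(\alpha')^\vee\},\{\alpha'\})$ be based root data (free $\mathbb Z$-modules of finite rank in perfect pairing, $\langle\alpha,\alpha^\vee\rangle=2$). Let $\lambda(\alpha),\lambda^*(\alpha),\lambda'(\alpha'),(\lambda^* )'(\alpha')$ be positive reals with $\lambda(\alpha)=\lambda^*(\alpha)$ unless $\alpha\in2X$ and $\lambda'(\alpha')=(\lambda^* )'(\alpha')$ unless $\alpha'\in2X'$. Fix $\mathbf q>1$; $q_1=\mathbf q^{\lambda(\alpha)}$, $q_0=\mathbf q^{\lambda^*(\alpha)}$, $q_1'=\mathbf q^{\lambda'(\alpha')}$, $q_0'=\mathbf q^{(\lambda^* )'(\alpha')}$. $s=s_\alpha$, $s'=s_{\alpha'}$. $\mathcal H=\mathbb C[Y]\otimes\mathcal H(W_0,q)$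 with $\mathbb C[Y]$ (basis $\theta_y$) and $\operatorname{span}(1,T_s)$, $(T_s+1)(T_s-q_1)=0$, as subalgebras and $\theta_yT_s-T_s\theta_{s(y)}=\big((q_1-1)+\theta_{-\alpha^\vee}(q_1^{1/2}q_0^{1/2}-q_1^{1/2}q_0^{-1/2})\big)\frac{\theta_y-\theta_{s(y)}}{\theta_0-\theta_{-2\alpha^\vee}}$; $\mathcal H'$ likewise from $\mathcal R',q_1',q_0'$ with generator $T_{s'}$. *)

From mathcomp Require Import all_boot all_algebra.
From mathcomp Require Import reals exp.
From mathcomp Require Import complex.
Set Implicit Arguments. Unset Strict Implicit. Unset Printing Implicit Defensive.
Import GRing.Theory Num.Theory.
Local Open Scope ring_scope.

(* Lattices X = Y = Z^r (row vectors of integers), in perfect pairing via the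
   standard dot product. Any perfect pairing of free Z-modules of rank r is
   isomorphic to this one. *)
Definition lat (r : nat) := 'rV[int]_r.

Definition pairing (r : nat) (x y : lat r) : int := \sum_(i < r) x 0 i * y 0 i.

Definition refl_Y (r : nat) (alpha alphav : lat r) (y : lat r) : lat r :=
  y - alphav *~ (pairing alpha y).

Definition in2X (r : nat) (alpha : lat r) : Prop := exists x : lat r, alpha = x *+ 2.

Definition rk1_datum (r : nat) (alpha alphav : lat r) (R : realType) (lam lamst : R) : Prop :=
  pairing alpha alphav = 2 /\ 0 < lam /\ 0 < lamst /\ (~ in2X alpha -> lam = lamst).

Definition bern_basis (C : fieldType) (A : algType C) (r : nat) (theta : lat r -> A) (T : A)
    (p : lat r * bool) : A :=
  theta p.1 * (if p.2 then T else 1).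

Definition in_CY (C : fieldType) (A : algType C) (r : nat) (theta : lat r -> A) (b : A) : Prop :=
  exists (s : seq (lat r)) (c : lat r -> C), b = \sum_(y <- s) c y *: theta y.

(* (A, theta, T) is the affine Hecke algebra H = C[Y] (x) H(W_0, q) of the rank-one
   datum (alpha, alphav) with parameters q1 = qb^lam, q0 = qb^lamst, i.e.
   - theta : Y -> A is multiplicative (C[Y] is a subalgebra with basis theta_y),
   - (T + 1)(T - q1) = 0,
   - the Bernstein cross relation holds, written after multiplying both sides by
     the denominator (theta_0 - theta_{-2 alpha^vee}) of C[Y] (a non-zero-divisor
     of H, so this is equivalent to the fractional form),
   - { theta_y T^eps } (y in Y, eps in {0,1}) is a C-basis of A. *)
Definition is_rank1_AHA (R : realType) (qb lam lamst : R) (r : nat) (alpha alphav : lat r)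
    (A : algType R[i]) (theta : lat r -> A) (T : A) : Prop :=
  let q1 : R := qb `^ lam in
  let q0 : R := qb `^ lamst in
  let q1C : R[i] := (q1%:C)%C in
  let kC : R[i] := ((Num.sqrt q1 * Num.sqrt q0 - Num.sqrt q1 / Num.sqrt q0)%:C)%C in
  theta 0 = 1 /\
  (forall y z, theta (y + z) = theta y * theta z) /\
  [/\ (T + 1) * (T - q1C *: 1) = 0,
      (forall y : lat r,
         (theta 0 - theta (- (alphav *+ 2))) *
           (theta y * T - T * theta (refl_Y alpha alphav y))
         = ((q1C - 1) *: 1 + kC *: theta (- alphav)) *
           (theta y - theta (refl_Y alpha alphav y))),
      (forall (s : seq (lat r * bool)) (c : lat r * bool -> R[i]),
         uniq s -> \sum_(p <- s) c p *: bern_basis theta T p = 0 ->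
         forall p, p \in s -> c p = 0) &
      (forall h : A, exists (s : seq (lat r * bool)) (c : lat r * bool -> R[i]),
         h = \sum_(p <- s) c p *: bern_basis theta T p)].

Definition is_alg_hom (C : fieldType) (A B : algType C) (I : A -> B) : Prop :=
  [/\ (forall (a : C) (x y : A), I (a *: x + y) = a *: I x + I y),
      (forall x y : A, I (x * y) = I x * I y) &
      I 1 = 1].

(* Dividing the Bernstein relation of H at y = alpha^vee by the non-zero-divisor
   1 - theta(-2 alpha^vee) gives
     theta(alpha^vee) T - T theta(-alpha^vee)
       = (q1 - 1) theta(alpha^vee) + (q1^1/2 q0^1/2 - q1^1/2 q0^-1/2).
   Since n is odd, alpha' is not in 2X', so H' has equal parameters q and, for y = (n/2) alpha'^vee,
     T' theta(-y) = theta(y) T' - (q - 1) sum_(j < n) theta(y - j alpha'^vee).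
   Transport the first relation by I and expand it in the Bernstein basis theta_y T'^eps of H'
   with the second one. Pairing the coefficients of theta_y T'^eps with a character psi of Y'
   gives linear forms on H': the T'-part against psi = 1 forces c^2 = 1, and the C[Y']-part
   against psi = 1 and psi = (-1)^<alpha', .> (both trivial on alpha'^vee) gives two equations
   whose comparison forces q1 = 1 or q0 = 1, which is impossible for qb > 1. *)

From HB Require Import structures.
From mathcomp Require Import all_boot all_order all_algebra.
From mathcomp Require Import reals exp.
From mathcomp Require Import complex.
From mathcomp Require Import ring zify.
From Stdlib Require Import ClassicalEpsilon.
Import Order.TTheory GRing.Theory Num.Theory.
Set Implicit Arguments. Unset Strict Implicit. Unset Printing Implicit Defensive.
Local Open Scope ring_scope.

Lemma big_partition_undup (M : nmodType) (I J : eqType)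
    (t : seq I) (f : I -> J) (F : I -> M) :
  \sum_(i <- t) F i = \sum_(j <- undup (map f t)) \sum_(i <- t | f i == j) F i.
Proof.
under [RHS]eq_bigr => j _ do rewrite big_mkcond.
rewrite exchange_big /=; apply: eq_big_seq => i it.
rewrite -big_mkcond -big_filter /=.
have -> : [seq j <- undup (map f t) | f i == j] = [:: f i].
  rewrite -(filter_pred1_uniq (undup_uniq (map f t))); last by rewrite mem_undup map_f.
  by apply: eq_filter => j; rewrite eq_sym.
by rewrite big_seq1.
Qed.

Section CoordinateFunctionals.
Variables (C : fieldType) (V : lmodType C) (K : eqType) (b : K -> V).
Hypothesis b_free : forall (s : seq K) (c : K -> C), uniq s ->
  \sum_(p <- s) c p *: b p = 0 -> forall p, p \in s -> c p = 0.
Hypothesis b_span : forall v : V, exists (s : seq K) (c : K -> C),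
  v = \sum_(p <- s) c p *: b p.

Definition lincomb (t : seq (K * C)) : V := \sum_(u <- t) u.2 *: b u.1.

Lemma lincomb_cat t t' : lincomb (t ++ t') = lincomb t + lincomb t'.
Proof. exact: big_cat. Qed.

Lemma lincomb_partition t :
  lincomb t = \sum_(p <- undup (map fst t)) (\sum_(u <- t | u.1 == p) u.2) *: b p.
Proof.
rewrite /lincomb (big_partition_undup _ fst); apply: eq_bigr => p _.
by rewrite scaler_suml; apply: eq_bigr => u /eqP ->.
Qed.

Lemma lincomb_eq0_coef t : lincomb t = 0 -> forall p, \sum_(u <- t | u.1 == p) u.2 = 0.
Proof.
rewrite lincomb_partition => t0 p.
have [pt | pNt] := boolP (p \in undup (map fst t)).
  exact: (b_free (undup_uniq _) t0 pt).
rewrite big_seq_cond big1 // => u /andP[ut /eqP up].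
by move: pNt; rewrite mem_undup -up map_f.
Qed.

Lemma lincomb_eq0_eval w t : lincomb t = 0 -> \sum_(u <- t) u.2 * w u.1 = 0.
Proof.
move/lincomb_eq0_coef => coef0; rewrite (big_partition_undup _ fst) big1 // => p _.
rewrite (eq_bigr (fun u => u.2 * w p)) => [|u /eqP -> //].
by rewrite -mulr_suml coef0 mul0r.
Qed.

Lemma lincomb_span v : exists t, v = lincomb t.
Proof.
have [s [c ->]] := b_span v.
by exists [seq (p, c p) | p <- s]; rewrite /lincomb big_map.
Qed.

Definition coords (v : V) : seq (K * C) :=
  proj1_sig (constructive_indefinite_description _ (lincomb_span v)).

Lemma coordsK v : lincomb (coords v) = v.
Proof. by rewrite /coords; case: constructive_indefinite_description. Qed.

Definition eval_coords (w : K -> C) (v : V) : C :=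
  \sum_(u <- coords v) u.2 * w u.1.

Lemma eval_coords_lincomb w t : eval_coords w (lincomb t) = \sum_(u <- t) u.2 * w u.1.
Proof.
set t' := coords (lincomb t).
have /(lincomb_eq0_eval w) : lincomb (t ++ [seq (u.1, - u.2) | u <- t']) = 0.
  rewrite lincomb_cat /lincomb big_map.
  rewrite [X in _ + X](eq_bigr (fun u => - (u.2 *: b u.1))) => [|u _]; last exact: scaleNr.
  by rewrite sumrN -/(lincomb t') coordsK subrr.
rewrite big_cat big_map /=.
rewrite [X in _ + X](eq_bigr (fun u => - (u.2 * w u.1))) => [|u _]; last exact: mulNr.
by rewrite sumrN => /eqP; rewrite subr_eq0 => /eqP.
Qed.

Lemma eval_coords_is_linear w : linear_for *%R (eval_coords w).
Proof.
move=> a v v'; rewrite -[v]coordsK -[v']coordsK.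
set s := coords v; set s' := coords v'.
have -> : a *: lincomb s + lincomb s' = lincomb ([seq (u.1, a * u.2) | u <- s] ++ s').
  rewrite lincomb_cat /lincomb big_map scaler_sumr.
  by congr (_ + _); apply: eq_bigr => u _; rewrite scalerA.
rewrite !eval_coords_lincomb big_cat big_map mulr_sumr /=.
by congr (_ + _); apply: eq_bigr => u _; rewrite mulrA.
Qed.

Definition coord_eval (w : K -> C) : {scalar V} :=
  HB.pack (eval_coords w) (GRing.isLinear.Build C V C *%R _ (eval_coords_is_linear w)).

Lemma coord_eval_lincomb w t : coord_eval w (lincomb t) = \sum_(u <- t) u.2 * w u.1.
Proof. exact: eval_coords_lincomb. Qed.

Lemma coord_eval_basis w p : coord_eval w (b p) = w p.
Proof.
have -> : b p = lincomb [:: (p, 1)] by rewrite /lincomb big_seq1 scale1r.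
by rewrite coord_eval_lincomb big_seq1 mul1r.
Qed.

Lemma eq_coord_eval w w' : w =1 w' -> coord_eval w =1 coord_eval w'.
Proof. by move=> ww' v; apply: eq_bigr => u _; rewrite ww'. Qed.

Lemma coord_eval_weightB w w' v :
  coord_eval (fun p => w p - w' p) v = coord_eval w v - coord_eval w' v.
Proof. by rewrite -sumrB; apply: eq_bigr => u _; rewrite mulrBr. Qed.

Lemma coord_eval_weightZ a w v : coord_eval (fun p => a * w p) v = a * coord_eval w v.
Proof. by rewrite mulr_sumr; apply: eq_bigr => u _; rewrite mulrCA. Qed.

Lemma coord_eval_eq0 v : (forall p, coord_eval (fun q => (q == p)%:R) v = 0) -> v = 0.
Proof.
move=> coord0; rewrite -(coordsK v) lincomb_partition big1 // => p _.
have <- : coord_eval (fun q => (q == p)%:R) v = \sum_(u <- coords v | u.1 == p) u.2.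
  rewrite /= /eval_coords [RHS]big_mkcond; apply: eq_bigr => u _.
  by case: eqP; rewrite ?mulr1 ?mulr0.
by rewrite coord0 scale0r.
Qed.

End CoordinateFunctionals.

Arguments coord_eval_basis [C V K b] b_free b_span w p.
Arguments coord_eval_eq0 [C V K b] b_free b_span [v].

Lemma pairingC r (x y : lat r) : pairing x y = pairing y x.
Proof. by apply: eq_bigr => i _; rewrite mulrC. Qed.

Lemma pairing_is_zmod_morphism r (x : lat r) : zmod_morphism (pairing x).
Proof.
by move=> y z; rewrite /pairing -sumrB; apply: eq_bigr => i _; rewrite !mxE mulrBr.
Qed.

HB.instance Definition _ r (x : lat r) :=
  GRing.isZmodMorphism.Build (lat r) int (pairing x) (pairing_is_zmod_morphism x).

Lemma lat_mulrSn_eq0 r (z : lat r) n : (z *+ n.+1 == 0) = (z == 0).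
Proof.
apply/eqP/eqP => [zn0|->]; last exact: mul0rn.
apply/matrixP => i j; have /eqP := congr1 (fun M : lat r => M i j) zn0.
by rewrite mulmxnE !mxE mulrn_eq0 => /eqP.
Qed.

Lemma pairing_half r (alpha alphav y : lat r) (m : int) :
  pairing alpha alphav = 2 -> y *+ 2 = alphav *~ m -> pairing alpha y = m.
Proof.
move=> pair2 /(congr1 (pairing alpha)); rewrite raddfMn raddfMz /= pair2.
by rewrite mulr2n mulrzz; lia.
Qed.

Lemma refl_Y_half r (alpha alphav y : lat r) (m : int) :
  pairing alpha alphav = 2 -> y *+ 2 = alphav *~ m -> refl_Y alpha alphav y = - y.
Proof.
by move=> pair2 ym; rewrite /refl_Y (pairing_half pair2 ym) -ym mulr2n opprD addrA subrr add0r.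
Qed.

Lemma odd_pairing_not_in2X r (alpha y : lat r) (n : nat) :
  pairing alpha y = n%:Z -> odd n -> ~ in2X alpha.
Proof.
move=> pair_n odd_n [x alpha2x].
move: pair_n; rewrite alpha2x pairingC raddfMn /= pairingC mulr2n.
have := odd_double_half n; rewrite odd_n -muln2; lia.
Qed.

Section LatticeCharacter.
Variables (R : pzRingType) (r : nat) (psi : lat r -> R).
Hypotheses (psi0 : psi 0 = 1) (psiD : {morph psi : y z / y + z >-> y * z}).

Lemma character_mulrn y m : psi (y *+ m) = psi y ^+ m.
Proof. by elim: m => [|m IHm]; rewrite ?mulr0n ?psi0 // mulrS psiD IHm exprS. Qed.

Lemma character_subr y x : psi x = 1 -> psi (y - x) = psi y.
Proof. by move=> psix; rewrite -[in RHS](subrK x y) [in RHS]psiD psix mulr1. Qed.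
End LatticeCharacter.

Section BernsteinBasis.
Variables (C : fieldType) (A : algType C) (r : nat) (theta : lat r -> A) (T : A).
Hypothesis theta0 : theta 0 = 1.
Hypothesis thetaD : forall y z, theta (y + z) = theta y * theta z.
Hypothesis bern_free : forall (s : seq (lat r * bool)) (c : lat r * bool -> C),
  uniq s -> \sum_(p <- s) c p *: bern_basis theta T p = 0 -> forall p, p \in s -> c p = 0.
Hypothesis bern_span : forall h : A, exists (s : seq (lat r * bool)) (c : lat r * bool -> C),
  h = \sum_(p <- s) c p *: bern_basis theta T p.

Local Notation coord_eval := (coord_eval bern_free bern_span).

Lemma thetaC y z : theta y * theta z = theta z * theta y.
Proof. by rewrite -!thetaD addrC. Qed.

Lemma CY_thetaC m y : in_CY theta m -> m * theta y = theta y * m.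
Proof.
case=> s [c ->]; rewrite mulr_suml mulr_sumr; apply: eq_bigr => z _.
by rewrite -scalerAl -scalerAr thetaC.
Qed.

Lemma coord_eval_theta_mul w z h :
  coord_eval w (theta z * h) = coord_eval (fun p => w (p.1 + z, p.2)) h.
Proof.
rewrite -(coordsK bern_span h); set t := coords _ _.
have -> : theta z * lincomb (bern_basis theta T) t =
    lincomb (bern_basis theta T) [seq ((u.1.1 + z, u.1.2), u.2) | u <- t].
  rewrite /lincomb big_map mulr_sumr; apply: eq_bigr => u _.
  by rewrite -scalerAr /bern_basis mulrA -thetaD addrC.
by rewrite !coord_eval_lincomb big_map.
Qed.

Lemma lreg_one_sub_theta z : z != 0 -> GRing.lreg (1 - theta z).
Proof.
move=> z0 h h' /eqP; rewrite -subr_eq0 -mulrBr => /eqP zh; apply/eqP; rewrite -subr_eq0.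
move: {h h'} (h - h') zh => h zh; apply/eqP.
apply: (coord_eval_eq0 bern_free bern_span) => p0.
pose ray p := p.2 = p0.2 /\ exists j, p.1 = p0.1 - z *+ j.
have ray_shift p : ray (p.1 + z, p.2) <-> ray p /\ p != p0.
  split=> [[/= e2 [j /= ej]] | [[e2 [[|j] ej]] pNp0]].
  - have ej' : p.1 = p0.1 - z *+ j.+1 by rewrite mulrS opprD addrA addrAC -ej addrK.
    split; first by split; last exists j.+1.
    apply: contraTneq z0 => pp0; move/eqP: ej'.
    by rewrite pp0 -subr_eq0 opprB addrCA subrr addr0 lat_mulrSn_eq0 negbK.
  - by case/eqP: pNp0; rewrite [p]surjective_pairing [p0]surjective_pairing ej e2 subr0.
  - by split=> //; exists j => /=; rewrite ej mulrS opprD addrA addrAC subrK.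
(* [w] is the indicator of the ray [p0 - N z]; as [z] is not torsion, [w - w (. + z)]
   is the indicator of [p0], so the [p0]-coordinate of [h] is [w ((1 - theta z) * h)]. *)
pose w p : C := if excluded_middle_informative (ray p) then 1 else 0.
have ray_p0 : ray p0 by split=> //; exists 0%N; rewrite subr0.
have w_shift p : w p - w (p.1 + z, p.2) = (p == p0)%:R.
  rewrite /w; have [to_ray from_ray] := ray_shift p.
  case: excluded_middle_informative => rp; case: excluded_middle_informative => rpz /=.
  - by case: (to_ray rpz) => _ /negbTE ->; rewrite subrr.
  - have /eqP -> : p == p0 by case: eqP => // /eqP pNp0; case: rpz; apply: from_ray.
    by rewrite eqxx subr0.
  - by case: rp; case: (to_ray rpz).
  - have pNp0 : p != p0 by apply: contra_not_neq rp => ->.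
    by rewrite (negbTE pNp0) subrr.
rewrite -(eq_coord_eval bern_free bern_span w_shift) coord_eval_weightB.
rewrite -coord_eval_theta_mul -linearB.
by rewrite -{1}[h]mul1r -mulrBl zh linear0.
Qed.

Lemma theta_telescope x y m :
  (1 - theta (- x)) * \sum_(j < m) theta (y - x *+ j) = theta y - theta (y - x *+ m).
Proof.
elim: m => [|m IHm]; first by rewrite big_ord0 mulr0 subr0 subrr.
rewrite big_ord_recr /= mulrDr IHm mulrBl mul1r -thetaD.
rewrite addrA subrK; congr (_ - theta _).
by rewrite mulrSr opprD addrCA [- x + _]addrC.
Qed.

Definition bern_eval (psi : lat r -> C) (eps : bool) : {scalar A} :=
  coord_eval (fun p => if p.2 == eps then psi p.1 else 0).

Lemma bern_eval_theta psi eps y : bern_eval psi eps (theta y) = (~~ eps)%:R * psi y.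
Proof.
have -> : theta y = bern_basis theta T (y, false) by rewrite /bern_basis mulr1.
by rewrite coord_eval_basis; case: eps; rewrite /= ?mul1r ?mul0r.
Qed.

Lemma bern_eval_thetaT psi eps y : bern_eval psi eps (theta y * T) = eps%:R * psi y.
Proof.
by rewrite -[_ * T]/(bern_basis theta T (y, true)) coord_eval_basis; case: eps;
  rewrite /= ?mul1r ?mul0r.
Qed.

Lemma bern_eval1 psi eps : psi 0 = 1 -> bern_eval psi eps 1 = (~~ eps)%:R.
Proof. by move=> psi0; rewrite -theta0 bern_eval_theta psi0 mulr1. Qed.

Lemma bern_evalT psi eps : psi 0 = 1 -> bern_eval psi eps T = eps%:R.
Proof. by move=> psi0; rewrite -[T]mul1r -theta0 bern_eval_thetaT psi0 mulr1. Qed.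

Lemma bern_eval_CY psi m : in_CY theta m -> bern_eval psi true m = 0.
Proof.
case=> s [c ->]; rewrite linear_sum big1 // => y _.
by rewrite scalarZ bern_eval_theta mul0r mulr0.
Qed.

Lemma bern_eval_theta_mul psi eps z h : {morph psi : y y' / y + y' >-> y * y'} ->
  bern_eval psi eps (theta z * h) = psi z * bern_eval psi eps h.
Proof.
move=> psiD; rewrite coord_eval_theta_mul -coord_eval_weightZ.
by apply: eq_coord_eval => p /=; case: eqP; rewrite ?mulr0 // psiD mulrC.
Qed.

Section BernsteinRelation.
Variables (alpha alphav : lat r) (Ka Kb : C).
Hypothesis pairing2 : pairing alpha alphav = 2.
Hypothesis cross : forall y,
  (theta 0 - theta (- (alphav *+ 2))) * (theta y * T - T * theta (refl_Y alpha alphav y))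
  = (Ka *: 1 + Kb *: theta (- alphav)) * (theta y - theta (refl_Y alpha alphav y)).

Lemma theta_double_coroot : theta (- (alphav *+ 2)) = theta (- alphav) * theta (- alphav).
Proof. by rewrite -thetaD mulr2n opprD. Qed.

Lemma double_coroot_neq0 : - (alphav *+ 2) != 0.
Proof.
rewrite oppr_eq0 lat_mulrSn_eq0; apply/eqP => alphav0.
by move: pairing2; rewrite alphav0 raddf0.
Qed.

Lemma bernstein_coroot :
  theta alphav * T - T * theta (- alphav) = Ka *: theta alphav + Kb *: 1.
Proof.
have reflv : refl_Y alpha alphav alphav = - alphav.
  by apply: refl_Y_half => //; rewrite pmulrn.
have := cross alphav; rewrite reflv theta0 => crossv.
apply: (lreg_one_sub_theta double_coroot_neq0); rewrite crossv.
set v := theta (- alphav); set u := theta alphav.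
have vu : v * u = 1 by rewrite -thetaD addNr.
rewrite theta_double_coroot -/v mulrDl mulr_algl -scalerAl mulrBr vu.
by rewrite mulrDr mulr_algr -scalerAr mulrBl mul1r -mulrA vu mulr1.
Qed.

Lemma bernstein_equal_params y m : Ka = Kb -> pairing alpha y = m%:Z ->
  theta y * T - T * theta (refl_Y alpha alphav y)
  = Ka *: \sum_(j < m) theta (y - alphav *+ j).
Proof.
move=> KaKb pair_m; have refly : refl_Y alpha alphav y = y - alphav *+ m.
  by rewrite /refl_Y pair_m pmulrn.
have := cross y; rewrite refly theta0 -KaKb => crossy.
apply: (lreg_one_sub_theta double_coroot_neq0); rewrite crossy.
rewrite -theta_telescope -scalerDr -scalerAl -scalerAr mulrA.
congr (Ka *: (_ * _)); rewrite theta_double_coroot.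
by rewrite mulrDl mul1r mulrBr mulr1 addrA subrK.
Qed.
End BernsteinRelation.

Section ImageRelation.
Variables (alpha alphav yn yk : lat r) (n : nat) (c c' K1 KA KB : C) (b' : A).
Hypothesis pairing2 : pairing alpha alphav = 2.
Hypothesis yn_half : yn *+ 2 = alphav *~ n%:Z.
Hypothesis b'_CY : in_CY theta b'.
Let D := \sum_(j < n) theta (yn - alphav *+ j).
Let IT := c' *: (theta yk * T) + b'.
Hypothesis T_theta : T * theta (- yn) = theta yn * T - K1 *: D.
Hypothesis image_rel :
  (c *: theta yn) * IT - IT * (c^-1 *: theta (- yn)) = KA *: (c *: theta yn) + KB *: 1.

Lemma bern_eval_image_rel psi (eps : bool) : psi 0 = 1 -> {morph psi : y z / y + z >-> y * z} ->
  c * psi yn * (c' * eps%:R * psi yk + bern_eval psi eps b')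
  - c^-1 * (c' * psi yk * (eps%:R * psi yn - K1 * bern_eval psi eps D)
            + psi (- yn) * bern_eval psi eps b')
  = (KA * c * psi yn + KB) * (~~ eps)%:R.
Proof.
move=> psi0 psiD.
have IT_Ui : IT * (c^-1 *: theta (- yn)) = c^-1 *:
    (c' *: (theta yk * (theta yn * T) - K1 *: (theta yk * D)) + theta (- yn) * b').
  rewrite /IT -scalerAr mulrDl -scalerAl -mulrA T_theta (CY_thetaC _ b'_CY).
  by rewrite mulrBr -scalerAr.
have := congr1 (bern_eval psi eps) image_rel.
rewrite IT_Ui /IT -!scalerAl !(linearB, linearD, scalarZ) !bern_eval_theta_mul //.
rewrite linearD scalarZ bern_eval_thetaT bern_eval_theta bern_evalT // bern_eval1 //.
by move=> E; apply: (etrans _ (etrans E _)); ring.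
Qed.

Section Character.
Variable psi : lat r -> C.
Hypotheses (psi0 : psi 0 = 1) (psiD : {morph psi : y z / y + z >-> y * z}).
Hypothesis psi_coroot : psi alphav = 1.

Lemma character_opp_half : psi (- yn) = psi yn.
Proof.
have psi_2yn : psi (yn *+ 2) = 1.
  by rewrite yn_half -pmulrn character_mulrn // psi_coroot expr1n.
by rewrite -(character_subr psiD yn psi_2yn) mulr2n opprD addrA subrr add0r.
Qed.

Lemma bern_eval_D eps : bern_eval psi eps D = (~~ eps)%:R * (n%:R * psi yn).
Proof.
rewrite linear_sum (eq_bigr (fun=> (~~ eps)%:R * psi yn)) => [|j _].
  by rewrite sumr_const card_ord -mulr_natl; ring.
by rewrite bern_eval_theta character_subr // character_mulrn // psi_coroot expr1n.
Qed.
End Character.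

Lemma image_rel_inv : c' != 0 -> c^-1 = c.
Proof.
move=> c'0; pose one (y : lat r) : C := 1.
have one_mul : {morph one : y z / y + z >-> y * z} by move=> y z; rewrite /one mulr1.
have := bern_eval_image_rel true erefl one_mul.
rewrite (bern_eval_D erefl one_mul erefl) (bern_eval_CY _ b'_CY) /one /= => E.
have /eqP : c' * (c - c^-1) = 0 by apply: (etrans _ (etrans E _)); ring.
by rewrite mulf_eq0 (negbTE c'0) subr_eq0 => /eqP.
Qed.

Lemma image_rel_character psi : psi 0 = 1 -> {morph psi : y z / y + z >-> y * z} ->
  psi alphav = 1 -> c' != 0 ->
  c * c' * K1 * n%:R * psi yk * psi yn = KA * c * psi yn + KB.
Proof.
move=> psi0 psiD psi_coroot c'0; have := bern_eval_image_rel false psi0 psiD.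
rewrite (bern_eval_D psi0 psiD psi_coroot) (character_opp_half psi0 psiD psi_coroot).
rewrite image_rel_inv //= => E.
by apply: (etrans _ (etrans E _)); ring.
Qed.

Lemma image_rel_degenerate : odd n -> 2 != 0 :> C -> c != 0 -> c' != 0 -> KA = 0 \/ KB = 0.
Proof.
move=> odd_n two0 c0 c'0; pose one (y : lat r) : C := 1.
have one_mul : {morph one : y z / y + z >-> y * z} by move=> y z; rewrite /one mulr1.
have := image_rel_character erefl one_mul erefl c'0; rewrite /one !mulr1 => E1.
pose sgn (y : lat r) : C := (-1) ^ pairing alpha y.
have sgn0 : sgn 0 = 1 by rewrite /sgn raddf0.
have sgnD : {morph sgn : y z / y + z >-> y * z}.
  by move=> y z; rewrite /sgn raddfD expfzDr // oppr_eq0 oner_eq0.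
have sgn_coroot : sgn alphav = 1 by rewrite /sgn pairing2 -exprnP sqrrN expr1n.
have sgn_yn : sgn yn = -1.
  by rewrite /sgn (pairing_half pairing2 yn_half) -exprnP -signr_odd odd_n expr1.
have := image_rel_character sgn0 sgnD sgn_coroot c'0; rewrite sgn_yn => E2.
have /orP[/eqP sgn_yk | /eqP sgn_yk] : (sgn yk == 1) || (sgn yk == -1).
  by rewrite -sqrf_eq1 /sgn expr2 -expfzMl mulrNN mulr1 exp1rz.
- right; rewrite sgn_yk in E2.
  have /eqP : KB * 2 = 0.
    transitivity ((KA * c * -1 + KB) + (KA * c + KB)); first ring.
    by rewrite -E1 -E2; ring.
  by rewrite mulf_eq0 (negbTE two0) orbF => /eqP.
- left; rewrite sgn_yk in E2.
  have /eqP : KA * c * 2 = 0.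
    transitivity ((KA * c + KB) - (KA * c * -1 + KB)); first ring.
    by rewrite -E1 -E2; ring.
  by rewrite !mulf_eq0 (negbTE two0) (negbTE c0) !orbF => /eqP.
Qed.
End ImageRelation.
End BernsteinBasis.

Section AlgHom.
Variables (C : fieldType) (A B : algType C) (I : A -> B).
Hypothesis I_hom : is_alg_hom I.

Lemma alg_hom0 : I 0 = 0.
Proof.
have [I_lin _ _] := I_hom; have := I_lin 1 0 0.
by rewrite scaler0 addr0 scale1r -{1}[I 0]addr0 => /addrI /esym.
Qed.

Lemma alg_homD x y : I (x + y) = I x + I y.
Proof. by have [I_lin _ _] := I_hom; rewrite -[x]scale1r I_lin !scale1r. Qed.

Lemma alg_homZ a x : I (a *: x) = a *: I x.
Proof. by have [I_lin _ _] := I_hom; rewrite -[a *: x]addr0 I_lin alg_hom0 addr0. Qed.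

Lemma alg_homB x y : I (x - y) = I x - I y.
Proof. by rewrite alg_homD -scaleN1r alg_homZ scaleN1r. Qed.

Lemma alg_hom_linv x x' y' : x' * x = 1 -> I x * y' = 1 -> I x' = y'.
Proof.
have [_ I_mul I_1] := I_hom => xx' Ixy'.
by rewrite -[I x']mulr1 -Ixy' mulrA -I_mul xx' I_1 mul1r.
Qed.
End AlgHom.

Lemma powR_neq1 (R : realType) (q x : R) : 1 < q -> 0 < x -> q `^ x != 1.
Proof.
move=> q_gt1 x_gt0; rewrite powR_eq1 !negb_or gt_eqF // -leNgt gt_eqF //.
by rewrite /= ltW // (lt_trans ltr01).
Qed.

Lemma hecke_kparam_neq0 (R : realType) (q a b : R) : 1 < q -> 0 < a -> 0 < b ->
  Num.sqrt (q `^ a) * Num.sqrt (q `^ b) - Num.sqrt (q `^ a) / Num.sqrt (q `^ b) != 0.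
Proof.
move=> q_gt1 a_gt0 b_gt0; have q_gt0 : 0 < q := lt_trans ltr01 q_gt1.
have sa_gt0 : 0 < Num.sqrt (q `^ a) by rewrite sqrtr_gt0 powR_gt0.
have sb_gt0 : 0 < Num.sqrt (q `^ b) by rewrite sqrtr_gt0 powR_gt0.
have -> : Num.sqrt (q `^ a) * Num.sqrt (q `^ b) - Num.sqrt (q `^ a) / Num.sqrt (q `^ b)
    = Num.sqrt (q `^ a) / Num.sqrt (q `^ b) * (Num.sqrt (q `^ b) ^+ 2 - 1).
  by field; rewrite gt_eqF.
rewrite sqr_sqrtr ?powR_ge0 // !mulf_eq0 invr_eq0 (gt_eqF sa_gt0) (gt_eqF sb_gt0) /=.
by rewrite subr_eq0 powR_neq1.
Qed.

Lemma hecke_kparam_equal (R : rcfType) (q : R) : 0 < q ->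
  Num.sqrt q * Num.sqrt q - Num.sqrt q / Num.sqrt q = q - 1.
Proof.
by move=> q_gt0; rewrite -expr2 sqr_sqrtr ?ltW // divff // sqrtr_eq0 -ltNge.
Qed.

Theorem lemmaD3 (R : realType) (qb : R) (hqb : 1 < qb)
    (r : nat) (alpha alphav : lat r) (lam lamst : R)
    (hR : rk1_datum alpha alphav lam lamst)
    (r' : nat) (alpha' alphav' : lat r') (lam' lamst' : R)
    (hR' : rk1_datum alpha' alphav' lam' lamst')
    (H : algType R[i]) (theta : lat r -> H) (T : H)
    (hH : is_rank1_AHA qb lam lamst alpha alphav theta T)
    (H' : algType R[i]) (theta' : lat r' -> H') (T' : H')
    (hH' : is_rank1_AHA qb lam' lamst' alpha' alphav' theta' T') :
  ~ (exists I : H -> H',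
       is_alg_hom I /\
       (exists (c' : R[i]) (k : int) (yk : lat r') (b' : H'),
          [/\ c' != 0, yk *+ 2 = alphav' *~ k, in_CY theta' b' &
              I T = c' *: (theta' yk * T') + b']) /\
       (exists (c : R[i]) (n : nat) (yn : lat r'),
          [/\ c != 0, odd n, yn *+ 2 = alphav' *~ n%:Z &
              I (theta alphav) = c *: theta' yn])).
Proof.
case=> I [I_hom [[c' [_ [yk [b' [c'0 _ b'_CY I_T]]]]] [c [n [yn [c0 odd_n yn_half I_theta]]]]]].
have [th0 [thD [_ cross free span]]] := hH.
have [th0' [thD' [_ cross' free' span']]] := hH'.
have [pair2 [lam_gt0 [lamst_gt0 _]]] := hR.
have [pair2' [_ [_ lam_eq']]] := hR'.
have pair_yn := pairing_half pair2' yn_half.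
have {}lam_eq' : lam' = lamst' := lam_eq' (odd_pairing_not_in2X pair_yn odd_n).
rewrite -lam_eq' hecke_kparam_equal ?powR_gt0 ?(lt_trans ltr01) // rmorphB rmorph1 in cross'.
have T_theta : T' * theta' (- yn) = theta' yn * T'
    - ((qb `^ lam')%:C%C - 1) *: \sum_(j < n) theta' (yn - alphav' *+ j).
  have := bernstein_equal_params th0' thD' free' span' pair2' cross' erefl pair_yn.
  by rewrite (refl_Y_half pair2' yn_half) => <-; rewrite opprB addrC subrK.
have I_theta_inv : I (theta (- alphav)) = c^-1 *: theta' (- yn).
  apply: (alg_hom_linv I_hom (x := theta alphav)); first by rewrite -thD addNr.
  by rewrite I_theta -scalerAl -scalerAr scalerA divff // -thD' subrr th0' scale1r.
have [_ I_mul I_1] := I_hom.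
have := congr1 I (bernstein_coroot th0 thD free span pair2 cross).
rewrite (alg_homB I_hom) (alg_homD I_hom) !(alg_homZ I_hom) !I_mul I_1 I_T I_theta.
rewrite I_theta_inv => image_rel.
have [] := image_rel_degenerate th0' thD' free' span' pair2' yn_half b'_CY T_theta image_rel
  odd_n _ c0 c'0.
- by rewrite pnatr_eq0.
- by apply/eqP; rewrite -(rmorph1 (real_complex R)) -rmorphB fmorph_eq0 subr_eq0 powR_neq1.
- by apply/eqP; rewrite fmorph_eq0 hecke_kparam_neq0.
Qed.
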